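(* Let $\overline{\mathcal R}(D)$ be defined exactly as $\mathcal R_{Y-X-Z}(D)$ except that the joint distribution is allowed to be of the form $p(x,y,z,u,w)=p(x,y)p(z|x)p(u|y)p(w|x,u,y)$. Then $\overline{\mathcal R}(D)=\mathcal R_{Y-X-Z}(D)$.
   Context: Let $\mathcal X,\mathcal Y,\mathcal Z,\hat{\mathcal X}$ be finite alphabets, $d:\mathcal X\times\hat{\mathcal X}\to[0,\infty)$ a distortion measure, and $(X,Y,Z)\sim p(x,y)p(z|x)$. $\mathcal R_{Y-X-Z}(D)$ is the set of all pairs $(R,R_1)$ with $R_1\ge I(U;Y|Z)$ and $R\ge I(X;W|U,Z)$ for some finite-alphabet random variables $U,W$ with joint distribution $p(x,y,z,u,w)=p(x,y)p(z|x)p(u|y)p(w|x,u)$ and a deterministic function $\hat X(U,W,Z)$ with $\mathbb E\, d(X,\hat X(U,W,Z))\le D$. *)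

From HB Require Import structures.
From mathcomp Require Import all_boot all_order all_algebra.
From mathcomp Require Import reals exp.
Set Implicit Arguments. Unset Strict Implicit. Unset Printing Implicit Defensive.
Import Order.TTheory GRing.Theory Num.Theory.
Local Open Scope ring_scope.

Section InfoDefs.
Variable R : realType.

Definition log2 (x : R) : R := ln x / ln 2.

Definition is_pmf (T : finType) (p : T -> R) : Prop :=
  (forall t, 0 <= p t) /\ \sum_(t : T) p t = 1.

Definition is_kernel (S T : finType) (k : S -> T -> R) : Prop :=
  forall s, is_pmf (k s).

(* Conditional mutual information I(A;B|C) (in bits) where A = fa(t),
   B = fb(t), C = fc(t) and t is distributed according to the pmf P on T;
   convention 0 log(...) = 0. *)
Definition cond_mutinfo (T A B C : finType) (P : T -> R)
    (fa : T -> A) (fb : T -> B) (fc : T -> C) : R :=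
  let pABC a b c := \sum_(t | (fa t == a) && (fb t == b) && (fc t == c)) P t in
  let pAC a c := \sum_(t | (fa t == a) && (fc t == c)) P t in
  let pBC b c := \sum_(t | (fb t == b) && (fc t == c)) P t in
  let pC c := \sum_(t | fc t == c) P t in
  \sum_(a : A) \sum_(b : B) \sum_(c : C)
     (if pABC a b c == 0 then 0
      else pABC a b c * log2 (pABC a b c * pC c / (pAC a c * pBC b c))).

Variables (X Y Z Xh : finType) (d : X -> Xh -> R)
  (pXY : X -> Y -> R) (pZgX : X -> Z -> R).

Section Joint.
Variables (U W : finType).
Definition xX (t : X * Y * Z * U * W) : X := t.1.1.1.1.
Definition xY (t : X * Y * Z * U * W) : Y := t.1.1.1.2.
Definition xZ (t : X * Y * Z * U * W) : Z := t.1.1.2.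
Definition xU (t : X * Y * Z * U * W) : U := t.1.2.
Definition xW (t : X * Y * Z * U * W) : W := t.2.
Definition xUZ (t : X * Y * Z * U * W) : U * Z := (xU t, xZ t).

Definition achieves (P : X * Y * Z * U * W -> R) (xhat : U -> W -> Z -> Xh)
    (D Rt R1 : R) : Prop :=
  [/\ R1 >= cond_mutinfo P xU xY xZ,
      Rt >= cond_mutinfo P xX xW xUZ &
      \sum_(t : X * Y * Z * U * W) P t * d (xX t) (xhat (xU t) (xW t) (xZ t))
        <= D].
End Joint.

Definition in_region_YXZ (D Rt R1 : R) : Prop :=
  exists (U W : finType) (pUgY : Y -> U -> R) (pWgXU : X * U -> W -> R)
         (xhat : U -> W -> Z -> Xh),
    [/\ is_kernel pUgY, is_kernel pWgXU &
        achieves (fun t => pXY (xX t) (xY t) * pZgX (xX t) (xZ t)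
                           * pUgY (xY t) (xU t) * pWgXU (xX t, xU t) (xW t))
                 xhat D Rt R1].

Definition in_region_bar (D Rt R1 : R) : Prop :=
  exists (U W : finType) (pUgY : Y -> U -> R) (pWgXUY : X * U * Y -> W -> R)
         (xhat : U -> W -> Z -> Xh),
    [/\ is_kernel pUgY, is_kernel pWgXUY &
        achieves (fun t => pXY (xX t) (xY t) * pZgX (xX t) (xZ t)
                           * pUgY (xY t) (xU t)
                           * pWgXUY (xX t, xU t, xY t) (xW t))
                 xhat D Rt R1].
End InfoDefs.

(* Every quantity constrained in the region depends on the joint law only
   through the marginals of (U, Y, Z) and of (X, W, U, Z).  Replacing the test
   channel p(w|x,u,y) by its average p(w|x,u) = sum_y p(y|x,u) p(w|x,u,y)
   leaves the first marginal unchanged because W is summed out, and the second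
   one unchanged because p(z|x) factors out of the sum over y.  The converse
   inclusion is trivial: a channel p(w|x,u) is a channel p(w|x,u,y). *)
From HB Require Import structures.
From mathcomp Require Import all_boot all_order all_algebra.
From mathcomp Require Import reals exp.
From mathcomp Require Import ring.
Import Order.TTheory GRing.Theory Num.Theory.
Local Open Scope ring_scope.

Set Implicit Arguments. Unset Strict Implicit.

Section Pushforward.
Variable R : realType.

Definition pushforward (T S : finType) (f : T -> S) (P : T -> R) (s : S) : R :=
  \sum_(t | f t == s) P t.

Variables (T S : finType) (f : T -> S) (P Q : T -> R).
Hypothesis eqPQ : pushforward f P =1 pushforward f Q.

Lemma eq_sum_mul_pushforward (g : T -> R) :
  (forall t t', f t = f t' -> g t = g t') ->
  \sum_t P t * g t = \sum_t Q t * g t.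
Proof.
move=> fg; rewrite (partition_big f predT) // [RHS](partition_big f predT) //.
apply: eq_bigr => s _.
have [t0 /eqP ft0 | fs_empty] := pickP (fun t => f t == s); last first.
  by rewrite !big_pred0 // => t; rewrite fs_empty.
have g_fiber t : f t == s -> g t = g t0 by move=> /eqP ft; apply: fg; rewrite ft ft0.
rewrite (eq_bigr (fun t => P t * g t0)) => [|t /g_fiber -> //].
rewrite [RHS](eq_bigr (fun t => Q t * g t0)) => [|t /g_fiber -> //].
by rewrite -!big_distrl /= -!/(pushforward f _ s) eqPQ.
Qed.

Lemma eq_sum_pushforward (p : pred T) :
  (forall t t', f t = f t' -> p t = p t') ->
  \sum_(t | p t) P t = \sum_(t | p t) Q t.
Proof.
move=> fp.
have sum_indicator (F : T -> R) : \sum_(t | p t) F t = \sum_t F t * (p t)%:R.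
  by rewrite big_mkcond; apply: eq_bigr => t _; case: (p t); rewrite ?mulr1 ?mulr0.
by rewrite !sum_indicator; apply: eq_sum_mul_pushforward => t t' /fp ->.
Qed.

Lemma eq_cond_mutinfo_pushforward (A B C : finType)
    (fa : T -> A) (fb : T -> B) (fc : T -> C) :
  (forall t t', f t = f t' -> [/\ fa t = fa t', fb t = fb t' & fc t = fc t']) ->
  cond_mutinfo P fa fb fc = cond_mutinfo Q fa fb fc.
Proof.
move=> fabc; rewrite /cond_mutinfo.
apply: eq_bigr => a _; apply: eq_bigr => b _; apply: eq_bigr => c _.
by rewrite !(@eq_sum_pushforward) // => t t' /fabc[ea eb ec]; rewrite ?ea ?eb ?ec.
Qed.

End Pushforward.

Section SumOutKernel.
Variables (R : realType) (T W S : finType) (f : T -> S) (A : T -> R)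
  (K : T -> W -> R).
Hypothesis K_sum1 : forall t, \sum_w K t w = 1.

Lemma pushforward_sum_out_kernel :
  pushforward (fun tw => f tw.1) (fun tw => A tw.1 * K tw.1 tw.2)
  =1 pushforward f A.
Proof.
move=> s; rewrite /pushforward.
rewrite -(eq_bigl _ _ (fun tw => andbT (f tw.1 == s))).
rewrite -(pair_big (fun t => f t == s) predT (fun t w => A t * K t w)) /=.
by apply: eq_bigr => t _; rewrite -mulr_sumr K_sum1 mulr1.
Qed.

End SumOutKernel.

Section AverageKernel.
Variables (R : realType) (X Y U W : finType).
Variables (pXY : X -> Y -> R) (pUgY : Y -> U -> R) (K : X * U * Y -> W -> R).
Variable y0 : Y.
Hypothesis pXY_ge0 : forall x y, 0 <= pXY x y.
Hypothesis pUgY_kernel : is_kernel pUgY.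
Hypothesis K_kernel : is_kernel K.

Definition weight_XU (x : X) (u : U) : R := \sum_y pXY x y * pUgY y u.

(* The law of W given (X, U) under p(x,y) p(u|y) K(w|x,u,y); on pairs (x, u)
   of weight zero it is arbitrary and taken to be K(.|x,u,y0). *)
Definition average_kernel (xu : X * U) (w : W) : R :=
  let: (x, u) := xu in
  if weight_XU x u == 0 then K (x, u, y0) w
  else (\sum_y pXY x y * pUgY y u * K (x, u, y) w) / weight_XU x u.

Lemma weight_XU_term_ge0 x u y : 0 <= pXY x y * pUgY y u.
Proof. by rewrite mulr_ge0 // (pUgY_kernel y).1. Qed.

Lemma average_kernel_is_kernel : is_kernel average_kernel.
Proof.
move=> [x u]; rewrite /average_kernel.
have [wt0 | wt_neq0] := eqVneq (weight_XU x u) 0; first exact: K_kernel.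
split=> [w | ].
  rewrite divr_ge0 ?sumr_ge0 // => y _.
    by rewrite mulr_ge0 ?weight_XU_term_ge0 // (K_kernel _).1.
  exact: weight_XU_term_ge0.
rewrite -mulr_suml exchange_big /=.
under eq_bigr do rewrite -mulr_sumr (K_kernel _).2 mulr1.
exact: mulfV.
Qed.

Lemma mixture_average_kernel x u w :
  \sum_y pXY x y * pUgY y u * K (x, u, y) w
  = weight_XU x u * average_kernel (x, u) w.
Proof.
rewrite /average_kernel; have [wt0 | wt_neq0] := eqVneq (weight_XU x u) 0.
  rewrite wt0 mul0r big1 // => y _.
  by rewrite (psumr_eq0P (fun y _ => weight_XU_term_ge0 x u y) wt0) ?mul0r.
by rewrite mulrC divfK.
Qed.

End AverageKernel.

Lemma pushforward_XWUZ_sum_Y (R : realType) (X Y Z U W : finType)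
    (F : X * Y * Z * U * W -> R) x w u z :
  pushforward (fun t => (xX t, xW t, xU t, xZ t)) F (x, w, u, z)
  = \sum_y F (x, y, z, u, w).
Proof.
rewrite /pushforward (partition_big (@xY X Y Z U W) predT) //=.
apply: eq_bigr => y _; apply: big_pred1 => -[[[[x' y'] z'] u'] w'] /=.
rewrite /xX /xY /xZ /xU /xW /= !xpair_eqE.
by case: (x' == x); case: (y' == y); case: (z' == z); case: (u' == u);
  case: (w' == w).
Qed.

Section AveragedTestChannel.
Variables (R : realType) (X Y Z Xh U W : finType) (d : X -> Xh -> R).
Variables (pXY : X -> Y -> R) (pZgX : X -> Z -> R) (pUgY : Y -> U -> R).
Variables (K : X * U * Y -> W -> R) (y0 : Y).
Hypothesis pXY_ge0 : forall x y, 0 <= pXY x y.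
Hypothesis pUgY_kernel : is_kernel pUgY.
Hypothesis K_kernel : is_kernel K.

Let Kavg := average_kernel pXY pUgY K y0.

Let joint (V : X * U * Y -> W -> R) (t : X * Y * Z * U * W) : R :=
  pXY (xX t) (xY t) * pZgX (xX t) (xZ t) * pUgY (xY t) (xU t)
  * V (xX t, xU t, xY t) (xW t).

Let Pbar := joint K.
Let Pavg := joint (fun xuy => Kavg (xuy.1.1, xuy.1.2)).

Lemma pushforward_UYZ_average_kernel :
  pushforward (fun t => (xU t, xY t, xZ t)) Pbar
  =1 pushforward (fun t => (xU t, xY t, xZ t)) Pavg.
Proof.
pose A (t : X * Y * Z * U) :=
  pXY t.1.1.1 t.1.1.2 * pZgX t.1.1.1 t.1.2 * pUgY t.1.1.2 t.2.
pose f (t : X * Y * Z * U) := (t.2, t.1.1.2, t.1.2).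
move=> s; rewrite /Pbar /Pavg /joint.
rewrite (pushforward_sum_out_kernel f A
  (K := fun t w => K (t.1.1.1, t.2, t.1.1.2) w)) => [|t]; last exact: (K_kernel _).2.
rewrite (pushforward_sum_out_kernel f A
  (K := fun t w => Kavg (t.1.1.1, t.2) w)) // => t.
exact: (average_kernel_is_kernel y0 pXY_ge0 pUgY_kernel K_kernel _).2.
Qed.

Lemma pushforward_XWUZ_average_kernel :
  pushforward (fun t => (xX t, xW t, xU t, xZ t)) Pbar
  =1 pushforward (fun t => (xX t, xW t, xU t, xZ t)) Pavg.
Proof.
move=> [[[x w] u] z]; rewrite !pushforward_XWUZ_sum_Y /Pbar /Pavg /joint.
have factor_pZgX (V : Y -> R) :
    \sum_y pXY x y * pZgX x z * pUgY y u * V y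
    = pZgX x z * \sum_y pXY x y * pUgY y u * V y.
  by rewrite mulr_sumr; apply: eq_bigr => y _; ring.
rewrite !factor_pZgX; congr (_ * _).
by rewrite (mixture_average_kernel K y0) // /weight_XU mulr_suml.
Qed.

Lemma achieves_average_kernel (xhat : U -> W -> Z -> Xh) (D Rt R1 : R) :
  achieves d Pbar xhat D Rt R1 -> achieves d Pavg xhat D Rt R1.
Proof.
case=> rate1 rate distortion; split.
- by rewrite -(eq_cond_mutinfo_pushforward pushforward_UYZ_average_kernel)
    // => t t' [-> -> ->].
- by rewrite -(eq_cond_mutinfo_pushforward pushforward_XWUZ_average_kernel)
    // => t t' [-> -> eu ez]; rewrite /xUZ eu ez.
- by rewrite -(eq_sum_mul_pushforward pushforward_XWUZ_average_kernel)
    // => t t' [-> -> -> ->].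
Qed.

End AveragedTestChannel.

Section Regions.
Variables (R : realType) (X Y Z Xh : finType) (d : X -> Xh -> R).
Variables (pXY : X -> Y -> R) (pZgX : X -> Z -> R) (D Rt R1 : R).

Lemma in_region_YXZ_bar :
  in_region_YXZ d pXY pZgX D Rt R1 -> in_region_bar d pXY pZgX D Rt R1.
Proof.
case=> U [W [pUgY [pWgXU [xhat [? pWgXU_kernel ?]]]]].
exists U, W, pUgY, (fun xuy => pWgXU (xuy.1.1, xuy.1.2)), xhat.
by split=> // xuy; apply: pWgXU_kernel.
Qed.

Lemma in_region_bar_YXZ :
  is_pmf (fun xy : X * Y => pXY xy.1 xy.2) ->
  in_region_bar d pXY pZgX D Rt R1 -> in_region_YXZ d pXY pZgX D Rt R1.
Proof.
move=> [pXY_ge0 pXY_sum1] [U [W [pUgY [K [xhat [pUgY_kernel K_kernel ach]]]]]].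
have [[_ y0] _] : exists xy : X * Y, true.
  have [xy _ | XY_empty] := pickP (fun _ : X * Y => true); first by exists xy.
  by move: pXY_sum1; rewrite big_pred0 // => /eqP; rewrite eq_sym oner_eq0.
have {}pXY_ge0 x y : 0 <= pXY x y by exact: (pXY_ge0 (x, y)).
exists U, W, pUgY, (average_kernel pXY pUgY K y0), xhat; split => //.
  exact: average_kernel_is_kernel.
exact: achieves_average_kernel.
Qed.

End Regions.

Theorem lemma3 (R : realType) (X Y Z Xh : finType) (d : X -> Xh -> R)
  (pXY : X -> Y -> R) (pZgX : X -> Z -> R)
  (hd : forall x xh, 0 <= d x xh)
  (hpXY : is_pmf (fun xy : X * Y => pXY xy.1 xy.2))
  (hpZ : is_kernel pZgX)
  (D : R) :
  forall Rt R1 : R,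
    in_region_bar d pXY pZgX D Rt R1 <-> in_region_YXZ d pXY pZgX D Rt R1.
Proof.
move=> Rt R1; split; first exact: in_region_bar_YXZ.
exact: in_region_YXZ_bar.
Qed.
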